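(* Let $(X,\mathrm{d})$ be a compact metric space. The metrics $\mathrm{d}_L$ and $\mathrm{d}_W$ define the same topology on the set $\mathrm{Lip}(X,\mathrm{d})$ of bi-Lipschitz homeomorphisms of $X$.
   Context: $\mathrm{d}_{C^0}(f,g)=\max_{x}\mathrm{d}(f(x),g(x))+\max_x\mathrm{d}(f^{-1}(x),g^{-1}(x))$. $\mathrm{d}'_W(f,g)=\sup_{x\ne y}\frac{|\mathrm{d}(f(x),f(y))-\mathrm{d}(g(x),g(y))|}{\mathrm{d}(x,y)}$ and $\mathrm{d}_W(f,g)=\mathrm{d}_{C^0}(f,g)+\mathrm{d}'_W(f,g)+\mathrm{d}'_W(f^{-1},g^{-1})$. $\mathrm{d}'_L(f,g)=\sup_{x\ne y}\left|\log\frac{\mathrm{d}(f(x),f(y))}{\mathrm{d}(g(x),g(y))}\right|$ and $\mathrm{d}_L(f,g)=\mathrm{d}_{C^0}(f,g)+\mathrm{d}'_L(f,g)+\mathrm{d}'_L(f^{-1},g^{-1})$. *)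

From Stdlib Require Import Reals Lra List ClassicalEpsilon.
Open Scope R_scope.

(* Supremum of a set of reals, with the convention sup0 E := sup (E ∪ {0}).
   All sets below consist of nonnegative reals, so this is the usual sup
   (and the usual max when attained) whenever E is nonempty, and 0 if E is
   empty.  For bi-Lipschitz homeomorphisms of a compact space all the sets
   below are bounded, so the sup exists. *)
Definition sup0 (E : R -> Prop) : R :=
  epsilon (inhabits 0) (fun s => is_lub (fun t => t = 0 \/ E t) s).

Section Defs.
Variable M : Metric_Space.
Local Notation X := (Base M).
Local Notation d := (dist M).

Definition m_open (U : X -> Prop) : Prop :=
  forall x, U x -> exists r, r > 0 /\ forall y, d x y < r -> U y.

Definition compact_space : Prop :=
  forall (I : Type) (V : I -> X -> Prop),
    (forall i, m_open (V i)) ->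
    (forall x, exists i, V i x) ->
    exists l : list I, forall x, exists i, In i l /\ V i x.

(* A homeomorphism candidate is a pair (f, f^{-1}). *)
Definition hpair : Type := ((X -> X) * (X -> X))%type.

Definition is_biLip (p : hpair) : Prop :=
  let (f, g) := p in
  (forall x, g (f x) = x) /\ (forall x, f (g x) = x) /\
  exists K, K > 0 /\
    forall x y, d (f x) (f y) <= K * d x y /\ d x y <= K * d (f x) (f y).

Definition inv_pair (p : hpair) : hpair := (snd p, fst p).

Definition dC0 (p q : hpair) : R :=
  sup0 (fun t => exists x, t = d (fst p x) (fst q x)) +
  sup0 (fun t => exists x, t = d (snd p x) (snd q x)).

Definition dW' (f g : X -> X) : R :=
  sup0 (fun t => exists x y, x <> y /\
          t = Rabs (d (f x) (f y) - d (g x) (g y)) / d x y).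

Definition dW (p q : hpair) : R :=
  dC0 p q + dW' (fst p) (fst q) + dW' (snd p) (snd q).

Definition dL' (f g : X -> X) : R :=
  sup0 (fun t => exists x y, x <> y /\
          t = Rabs (ln (d (f x) (f y) / d (g x) (g y)))).

Definition dL (p q : hpair) : R :=
  dC0 p q + dL' (fst p) (fst q) + dL' (snd p) (snd q).

(* Open subsets of Lip(X,d) for a metric D on it (U is read as U ∩ Lip). *)
Definition lip_open (D : hpair -> hpair -> R) (U : hpair -> Prop) : Prop :=
  forall p, is_biLip p -> U p ->
    exists r, r > 0 /\ forall q, is_biLip q -> D p q < r -> U q.

End Defs.

(* Everything reduces to a comparison of the two scale-invariant quantities
   on a single pair of points: with a = d(f x, f y) and b = d(g x, g y), the
   ratio a / b is within a factor 1 + e of 1 exactly when |ln (a / b)| is at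
   most ln (1 + e), and since f is bi-Lipschitz with constant K, a is
   comparable to d(x, y) up to K.  Hence for 0 < e <= 1, componentwise,
   d'_W(f, g) <= e / (2K) forces d'_L(f, g) <= e, and d'_L(f, g) <= ln (1 + e)
   forces d'_W(f, g) <= 2Ke, for every bi-Lipschitz g.  The C^0 part is common
   to both metrics; compactness only serves to make it a genuine (nonnegative)
   supremum. *)
From Stdlib Require Import Reals Lra ClassicalEpsilon List.
Open Scope R_scope.

Lemma sup0_is_lub (E : R -> Prop) (B : R) :
  (forall t, E t -> t <= B) -> is_lub (fun t => t = 0 \/ E t) (sup0 E).
Proof.
  intro HB. unfold sup0. apply epsilon_spec.
  destruct (completeness (fun t => t = 0 \/ E t)) as [s Hs].
  - exists (Rmax 0 B). intros t [->|Ht].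
    + apply Rmax_l.
    + apply Rle_trans with B; [apply HB; exact Ht | apply Rmax_r].
  - exists 0; left; reflexivity.
  - exists s; exact Hs.
Qed.

Lemma sup0_ge0 (E : R -> Prop) (B : R) : (forall t, E t -> t <= B) -> 0 <= sup0 E.
Proof. intro HB. apply (sup0_is_lub E B HB). left; reflexivity. Qed.

Lemma le_sup0 (E : R -> Prop) (B t : R) :
  (forall t, E t -> t <= B) -> E t -> t <= sup0 E.
Proof. intros HB Ht. apply (sup0_is_lub E B HB). right; exact Ht. Qed.

Lemma sup0_le (E : R -> Prop) (c : R) :
  (forall t, E t -> t <= c) -> 0 <= c -> sup0 E <= c.
Proof.
  intros Hc Hc0. apply (sup0_is_lub E c Hc). intros t [->|Ht]; auto.
Qed.

Lemma Rabs_le_between (a b : R) : Rabs a <= b -> - b <= a <= b.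
Proof.
  intro H. pose proof (Rle_abs a). pose proof (Rle_abs (- a)).
  rewrite Rabs_Ropp in *. lra.
Qed.

Lemma ln_le_iff (x y : R) : 0 < x -> 0 < y -> ln x <= ln y <-> x <= y.
Proof.
  intros Hx Hy. split; intro H.
  - destruct (Rle_or_lt x y) as [Hle|Hlt]; [exact Hle|].
    pose proof (ln_increasing y x Hy Hlt). lra.
  - destruct H as [Hlt | ->]; [left; apply ln_increasing; auto | lra].
Qed.

Lemma ln1p_le (e : R) : -1 < e -> ln (1 + e) <= e.
Proof.
  intro He. rewrite <- (ln_exp e) at 2.
  apply ln_le_iff; [lra | apply exp_pos | apply exp_ineq1_le].
Qed.

Lemma abs_ln_div_le_ln1p (a b e : R) : 0 < a -> 0 < b -> 0 <= e ->
  Rabs (ln (a / b)) <= ln (1 + e) <-> a <= (1 + e) * b /\ b <= (1 + e) * a.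
Proof.
  intros Ha Hb He.
  assert (Hab : ln (a / b) = ln a - ln b).
  { unfold Rdiv. rewrite ln_mult, ln_Rinv; [ring | auto | auto | apply Rinv_0_lt_compat; auto]. }
  assert (He1 : 0 < 1 + e) by lra.
  rewrite Hab, <- (ln_le_iff a ((1 + e) * b)), <- (ln_le_iff b ((1 + e) * a)),
    !ln_mult by nra.
  split.
  - intro H. apply Rabs_le_between in H. lra.
  - intros [Hu Hl]. apply Rabs_le. lra.
Qed.

Lemma ratio_close_of_abs_sub_le (a b e : R) : 0 < a -> 0 < b -> 0 <= e <= 1 ->
  Rabs (a - b) <= e / 2 * a -> a <= (1 + e) * b /\ b <= (1 + e) * a.
Proof.
  intros Ha Hb He H. apply Rabs_le_between in H. split; nra.
Qed.

Lemma abs_sub_le_of_ratio_close (a b e : R) : 0 < a -> 0 < b -> 0 <= e <= 1 ->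
  a <= (1 + e) * b -> b <= (1 + e) * a -> Rabs (a - b) <= 2 * e * a.
Proof.
  intros Ha Hb He Hu Hl. apply Rabs_le. split; nra.
Qed.

Section Metric.
Variable M : Metric_Space.
Local Notation X := (Base M).
Local Notation d := (dist M).

Lemma dist_pos_neq (x y : X) : x <> y -> 0 < d x y.
Proof.
  intro Hxy. destruct (dist_pos M x y) as [H|H]; [exact H|].
  apply (dist_refl M) in H. contradiction.
Qed.

Lemma dist_bounded_on_list (a : X) (l : list X) :
  exists B, forall c, In c l -> d a c <= B.
Proof.
  induction l as [|c0 l [B HB]].
  - exists 0. intros c [].
  - exists (Rmax (d a c0) B). intros c [<- | Hc].
    + apply Rmax_l.
    + apply Rle_trans with B; [apply HB; exact Hc | apply Rmax_r].
Qed.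

(* Cover X by the open unit balls and extract a finite subcover. *)
Lemma compact_space_bounded : compact_space M -> exists B, forall y z, d y z <= B.
Proof.
  intro Hc. destruct (Hc X (fun c y => d c y < 1)) as [l Hl].
  - intros c x Hx. exists (1 - d c x). split; [lra|].
    intros y Hy. pose proof (dist_tri M c y x). lra.
  - intro x. exists x. rewrite (proj2 (dist_refl M x x) eq_refl). lra.
  - destruct l as [|a l].
    + exists 0. intro y. destruct (Hl y) as [c [[] _]].
    + destruct (dist_bounded_on_list a (a :: l)) as [B HB]. exists (2 + 2 * B).
      intros y z. destruct (Hl y) as [i [Hi Hy]]. destruct (Hl z) as [j [Hj Hz]].
      pose proof (HB i Hi). pose proof (HB j Hj).
      pose proof (dist_tri M y z i). pose proof (dist_tri M i z a).
      pose proof (dist_tri M a z j).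
      rewrite (dist_sym M y i) in *. rewrite (dist_sym M i a) in *. lra.
Qed.

Lemma dC0_ge0 : compact_space M -> forall p q, 0 <= dC0 M p q.
Proof.
  intros Hc p q. destruct (compact_space_bounded Hc) as [B HB]. unfold dC0.
  apply Rplus_le_le_0_compat; apply sup0_ge0 with B; intros t [x ->]; apply HB.
Qed.

Definition bilipschitz_with (K : R) (f : X -> X) : Prop :=
  forall x y, d (f x) (f y) <= K * d x y /\ d x y <= K * d (f x) (f y).

Lemma is_biLip_bilipschitz_with (p : hpair M) : is_biLip M p ->
  exists K, 0 < K /\ bilipschitz_with K (fst p) /\ bilipschitz_with K (snd p).
Proof.
  destruct p as [f g]; simpl. intros [_ [Hfg [K [HK Hf]]]].
  exists K. split; [exact HK|]. split; [exact Hf|].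
  intros x y. destruct (Hf (g x) (g y)) as [H1 H2]. rewrite !Hfg in H1, H2. auto.
Qed.

Section TwoMaps.
Variables (f g : X -> X) (K K' : R).
Hypotheses (HK : 0 < K) (HK' : 0 < K').
Hypotheses (Hf : bilipschitz_with K f) (Hg : bilipschitz_with K' g).

Lemma dist_images_pos (x y : X) : x <> y -> 0 < d (f x) (f y) /\ 0 < d (g x) (g y).
Proof.
  intro Hxy. pose proof (dist_pos_neq x y Hxy). destruct (Hf x y), (Hg x y). split; nra.
Qed.

Lemma dW'_set_bounded (t : R) :
  (exists x y, x <> y /\ t = Rabs (d (f x) (f y) - d (g x) (g y)) / d x y) ->
  t <= K + K'.
Proof.
  intros [x [y [Hxy ->]]]. pose proof (dist_pos_neq x y Hxy).
  destruct (Hf x y), (Hg x y), (dist_images_pos x y Hxy).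
  apply Rmult_le_reg_r with (d x y); [lra|].
  unfold Rdiv. rewrite Rmult_assoc, Rinv_l, Rmult_1_r by lra.
  apply Rabs_le. split; nra.
Qed.

Lemma dL'_set_bounded (t : R) :
  (exists x y, x <> y /\ t = Rabs (ln (d (f x) (f y) / d (g x) (g y)))) ->
  t <= ln (1 + K * K').
Proof.
  intros [x [y [Hxy ->]]]. pose proof (dist_pos_neq x y Hxy).
  destruct (Hf x y), (Hg x y), (dist_images_pos x y Hxy).
  apply abs_ln_div_le_ln1p; [lra | lra | nra | split; nra].
Qed.

Lemma dW'_ge0 : 0 <= dW' M f g.
Proof. apply sup0_ge0 with (K + K'). exact dW'_set_bounded. Qed.

Lemma dL'_ge0 : 0 <= dL' M f g.
Proof. apply sup0_ge0 with (ln (1 + K * K')). exact dL'_set_bounded. Qed.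

Lemma abs_sub_dist_le_dW' (x y : X) : x <> y ->
  Rabs (d (f x) (f y) - d (g x) (g y)) <= dW' M f g * d x y.
Proof.
  intro Hxy. pose proof (dist_pos_neq x y Hxy).
  replace (Rabs _) with (Rabs (d (f x) (f y) - d (g x) (g y)) / d x y * d x y)
    by (field; lra).
  apply Rmult_le_compat_r; [lra|].
  apply le_sup0 with (K + K'); [exact dW'_set_bounded | exists x, y; auto].
Qed.

Lemma abs_ln_dist_le_dL' (x y : X) : x <> y ->
  Rabs (ln (d (f x) (f y) / d (g x) (g y))) <= dL' M f g.
Proof.
  intro Hxy. apply le_sup0 with (ln (1 + K * K')); [exact dL'_set_bounded|].
  exists x, y; auto.
Qed.

Lemma dL'_le_of_dW'_le (e : R) : 0 < e <= 1 ->
  K * dW' M f g <= e / 2 -> dL' M f g <= e.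
Proof.
  intros He HW. unfold dL'. apply sup0_le; [|lra].
  intros t [x [y [Hxy ->]]]. pose proof (dist_pos_neq x y Hxy).
  destruct (Hf x y), (dist_images_pos x y Hxy).
  pose proof (abs_sub_dist_le_dW' x y Hxy). pose proof dW'_ge0.
  apply Rle_trans with (ln (1 + e)); [|apply ln1p_le; lra].
  apply abs_ln_div_le_ln1p; [lra | lra | lra |].
  apply ratio_close_of_abs_sub_le; [lra | lra | lra | nra].
Qed.

Lemma dW'_le_of_dL'_le (e : R) : 0 <= e <= 1 ->
  dL' M f g <= ln (1 + e) -> dW' M f g <= 2 * K * e.
Proof.
  intros He HL. unfold dW'. apply sup0_le; [|nra].
  intros t [x [y [Hxy ->]]]. pose proof (dist_pos_neq x y Hxy).
  destruct (Hf x y), (dist_images_pos x y Hxy) as [Ha Hb].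
  pose proof (abs_ln_dist_le_dL' x y Hxy).
  destruct (proj1 (abs_ln_div_le_ln1p _ _ e Ha Hb (proj1 He)) ltac:(lra)) as [Hu Hl].
  pose proof (abs_sub_le_of_ratio_close _ _ e Ha Hb He Hu Hl).
  apply Rmult_le_reg_r with (d x y); [lra|].
  unfold Rdiv. rewrite Rmult_assoc, Rinv_l, Rmult_1_r by lra. nra.
Qed.

End TwoMaps.

Definition locally_dominated (D D' : hpair M -> hpair M -> R) : Prop :=
  forall p, is_biLip M p -> forall r, 0 < r ->
    exists delta, 0 < delta /\
      forall q, is_biLip M q -> D' p q < delta -> D p q < r.

Lemma lip_open_of_locally_dominated (D D' : hpair M -> hpair M -> R) (U : hpair M -> Prop) :
  locally_dominated D D' -> lip_open M D U -> lip_open M D' U.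
Proof.
  intros Hdom HU p Hp Up. destruct (HU p Hp Up) as [r [Hr HrU]].
  destruct (Hdom p Hp r Hr) as [delta [Hdelta Hq]].
  exists delta. split; [exact Hdelta|]. auto.
Qed.

Lemma dL_locally_dominated_by_dW :
  compact_space M -> locally_dominated (dL M) (dW M).
Proof.
  intros Hc p Hp r Hr. destruct (is_biLip_bilipschitz_with p Hp) as [K [HK [Hf Hg]]].
  set (e := Rmin 1 (r / 4)).
  assert (He : 0 < e <= 1) by (split; [apply Rmin_pos | apply Rmin_l]; lra).
  assert (Her : e <= r / 4) by apply Rmin_r.
  exists (Rmin (r / 4) (e / (2 * K))).
  split; [apply Rmin_pos; [lra | apply Rdiv_lt_0_compat; lra]|].
  intros q Hq HW. destruct (is_biLip_bilipschitz_with q Hq) as [K' [HK' [Hf' Hg']]].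
  unfold dW, dL in *.
  pose proof (Rmin_l (r / 4) (e / (2 * K))). pose proof (Rmin_r (r / 4) (e / (2 * K))).
  pose proof (dC0_ge0 Hc p q).
  pose proof (dW'_ge0 _ _ _ _ HK HK' Hf Hf'). pose proof (dW'_ge0 _ _ _ _ HK HK' Hg Hg').
  assert (HKe : forall w, w <= e / (2 * K) -> K * w <= e / 2).
  { intros w Hw. replace (e / 2) with (K * (e / (2 * K))) by (field; lra).
    apply Rmult_le_compat_l; lra. }
  pose proof (dL'_le_of_dW'_le _ _ _ _ HK HK' Hf Hf' e He (HKe (dW' M (fst p) (fst q)) ltac:(lra))).
  pose proof (dL'_le_of_dW'_le _ _ _ _ HK HK' Hg Hg' e He (HKe (dW' M (snd p) (snd q)) ltac:(lra))).
  lra.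
Qed.

Lemma dW_locally_dominated_by_dL :
  compact_space M -> locally_dominated (dW M) (dL M).
Proof.
  intros Hc p Hp r Hr. destruct (is_biLip_bilipschitz_with p Hp) as [K [HK [Hf Hg]]].
  set (e := Rmin 1 (r / (8 * K))).
  assert (He : 0 < e <= 1)
    by (split; [apply Rmin_pos; [lra | apply Rdiv_lt_0_compat; lra] | apply Rmin_l]).
  assert (HKe : 2 * K * e <= r / 4).
  { apply Rle_trans with (2 * K * (r / (8 * K))).
    - apply Rmult_le_compat_l; [lra | apply Rmin_r].
    - right. field. lra. }
  assert (Hln : 0 < ln (1 + e)) by (rewrite <- ln_1; apply ln_increasing; lra).
  exists (Rmin (r / 4) (ln (1 + e))). split; [apply Rmin_pos; lra|].
  intros q Hq HL. destruct (is_biLip_bilipschitz_with q Hq) as [K' [HK' [Hf' Hg']]].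
  unfold dW, dL in *.
  pose proof (Rmin_l (r / 4) (ln (1 + e))). pose proof (Rmin_r (r / 4) (ln (1 + e))).
  pose proof (dC0_ge0 Hc p q).
  pose proof (dL'_ge0 _ _ _ _ HK HK' Hf Hf'). pose proof (dL'_ge0 _ _ _ _ HK HK' Hg Hg').
  pose proof (dW'_le_of_dL'_le _ _ _ _ HK HK' Hf Hf' e ltac:(lra) ltac:(lra)).
  pose proof (dW'_le_of_dL'_le _ _ _ _ HK HK' Hg Hg' e ltac:(lra) ltac:(lra)).
  lra.
Qed.

End Metric.

Theorem mainTheorem5 (M : Metric_Space) (Hc : compact_space M) :
  forall U : hpair M -> Prop, lip_open M (dL M) U <-> lip_open M (dW M) U.
Proof.
  intro U. split; apply lip_open_of_locally_dominated.
  - exact (dL_locally_dominated_by_dW M Hc).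
  - exact (dW_locally_dominated_by_dL M Hc).
Qed.
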